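(* Let $\mathcal M$ be a complete, connected Riemannian manifold, let $a=(a_1,\dots,a_K)\in\mathbb R^K$ be a weight vector (entries possibly negative) with $\sum_j a_j>0$, and let $r>0$. Then there is $R>0$, depending only on $r$ and $a$, such that for every $x\in\mathcal M$ and every $u=(u_1,\dots,u_K)\in\mathcal M^K$ with all $u_j$ contained in the ball $B(x,r)$, every minimizer $v^\ast$ of $v\mapsto\sum_{j=1}^K a_j\,\mathrm{dist}(v,u_j)^2$ over $v\in\mathcal M$ is contained in the ball $B(x,R)$.
   Context: $\mathrm{dist}$ denotes the Riemannian distance on $\mathcal M$ and $B(x,r)$ the (metric) ball of radius $r$ around $x$. *)

From Stdlib Require Import Reals.
Open Scope R_scope.

Definition is_metric {T : Type} (d : T -> T -> R) : Prop :=
  (forall x y, 0 <= d x y) /\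
  (forall x y, d x y = 0 <-> x = y) /\
  (forall x y, d x y = d y x) /\
  (forall x y z, d x z <= d x y + d y z).

Definition metric_complete {T : Type} (d : T -> T -> R) : Prop :=
  forall s : nat -> T,
    (forall eps, 0 < eps -> exists N, forall m n, (N <= m)%nat -> (N <= n)%nat ->
        d (s m) (s n) < eps) ->
    exists l, forall eps, 0 < eps -> exists N, forall n, (N <= n)%nat -> d (s n) l < eps.

(* Length space (approximate midpoint characterization; for complete metric
   spaces equivalent to the metric being intrinsic). *)
Definition approx_midpoints {T : Type} (d : T -> T -> R) : Prop :=
  forall x y eps, 0 < eps -> exists z,
    d x z <= d x y / 2 + eps /\ d z y <= d x y / 2 + eps.

Fixpoint sumK (K : nat) (f : nat -> R) : R :=
  match K with
  | O => 0
  | S k => sumK k f + f k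
  end.

Definition wobj {T : Type} (d : T -> T -> R) (K : nat) (a : nat -> R) (u : nat -> T)
  (v : T) : R :=
  sumK K (fun j => a j * (d v (u j))^2).

Definition is_minimizer {T : Type} (d : T -> T -> R) (K : nat) (a : nat -> R)
  (u : nat -> T) (v : T) : Prop :=
  forall w : T, wobj d K a u v <= wobj d K a u w.

From Stdlib Require Import Reals Lra Psatz.
Open Scope R_scope.

(* Compare the objective at a minimizer [v] with its value at the centre [x].
   At [x] every squared distance is below [r^2], so the objective is at most
   [B r^2] with [B = sum_j |a_j|].  At [v], the triangle inequality puts every
   [dist(v,u_j)^2] within [r (2 D + r)] of [D^2], where [D = dist(x,v)], so the
   objective is at least [A D^2 - B r (2 D + r)] with [A = sum_j a_j > 0].
   Minimality forces [A D^2 <= 2 B r D + 2 B r^2], which bounds [D] by a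
   constant depending on [a] and [r] only. *)

Lemma sumK_ge0 (K : nat) (f : nat -> R) :
  (forall j, (j < K)%nat -> 0 <= f j) -> 0 <= sumK K f.
Proof.
  induction K as [|K IH]; intros Hf; simpl; [lra|].
  pose proof (IH (fun j Hj => Hf j (Nat.lt_lt_succ_r _ _ Hj))).
  pose proof (Hf K (Nat.lt_succ_diag_r K)).
  lra.
Qed.

Lemma sumK_mult_r (K : nat) (f : nat -> R) (c : R) :
  sumK K (fun j => f j * c) = sumK K f * c.
Proof. induction K as [|K IH]; simpl; [ring|]. rewrite IH; ring. Qed.

Lemma sumK_weighted_dev (K : nat) (a f g : nat -> R) (c : R) :
  (forall j, (j < K)%nat -> Rabs (f j - g j) <= c) ->
  Rabs (sumK K (fun j => a j * f j) - sumK K (fun j => a j * g j))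
    <= sumK K (fun j => Rabs (a j)) * c.
Proof.
  induction K as [|K IH]; intros Hfg; simpl.
  - rewrite Rminus_0_r, Rabs_R0; lra.
  - pose proof (IH (fun j Hj => Hfg j (Nat.lt_lt_succ_r _ _ Hj))) as HS.
    pose proof (Hfg K (Nat.lt_succ_diag_r K)) as HK.
    replace (sumK K (fun j => a j * f j) + a K * f K
             - (sumK K (fun j => a j * g j) + a K * g K))
      with ((sumK K (fun j => a j * f j) - sumK K (fun j => a j * g j))
            + a K * (f K - g K)) by ring.
    eapply Rle_trans; [apply Rabs_triang|].
    rewrite Rabs_mult.
    pose proof (Rmult_le_compat_l _ _ _ (Rabs_pos (a K)) HK).
    lra.
Qed.

Lemma quadratic_le_bound (A p q D : R) :
  0 < A -> 0 <= p -> 0 <= q -> 0 <= D ->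
  A * D ^ 2 <= p * D + q -> D < 1 + (p + q) / A.
Proof.
  intros HA Hp Hq HD Hquad.
  assert (Hfrac : 0 <= (p + q) / A) by (apply Rle_mult_inv_pos; lra).
  destruct (Rlt_or_le D 1) as [HD1 | HD1]; [lra|].
  assert (HAD : A * D <= p + q).
  { apply (Rmult_le_reg_l D); nra. }
  assert (D <= (p + q) / A).
  { apply (Rmult_le_reg_l A); [lra|]. field_simplify; lra. }
  lra.
Qed.

Section Metric.

Variables (T : Type) (d : T -> T -> R).
Hypothesis d_metric : is_metric d.

Lemma dist_sq_dev (x u v : T) :
  Rabs (d v u ^ 2 - d x v ^ 2) <= d x u * (2 * d x v + d x u).
Proof.
  destruct d_metric as [Hpos [_ [Hsym Htri]]].
  pose proof (Htri v x u) as Hvu; pose proof (Htri x u v) as Hxv.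
  rewrite (Hsym v x) in Hvu; rewrite (Hsym u v) in Hxv.
  pose proof (Hpos x u); pose proof (Hpos x v); pose proof (Hpos v u).
  replace (d v u ^ 2 - d x v ^ 2)
    with ((d v u - d x v) * (2 * d x v + (d v u - d x v))) by ring.
  rewrite Rabs_mult, (Rabs_pos_eq (2 * d x v + _)) by lra.
  apply Rmult_le_compat; [apply Rabs_pos | lra | apply Rabs_le; lra | lra].
Qed.

Lemma minimizer_dist_sq_le (K : nat) (a : nat -> R) (u : nat -> T) (x v : T)
  (r : R) :
  (forall j, (j < K)%nat -> d x (u j) < r) -> is_minimizer d K a u v ->
  sumK K a * d x v ^ 2
    <= 2 * sumK K (fun j => Rabs (a j)) * r * d x v
       + 2 * sumK K (fun j => Rabs (a j)) * r ^ 2.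
Proof.
  intros Hu Hmin.
  destruct d_metric as [Hpos _].
  set (B := sumK K (fun j => Rabs (a j))).
  assert (HD : 0 <= d x v) by apply Hpos.
  assert (Hv : Rabs (wobj d K a u v - sumK K a * d x v ^ 2)
               <= B * (r * (2 * d x v + r))).
  { unfold wobj; rewrite <- sumK_mult_r.
    apply sumK_weighted_dev; intros j Hj.
    pose proof (Hu j Hj); pose proof (Hpos x (u j)).
    eapply Rle_trans; [apply dist_sq_dev|].
    apply Rmult_le_compat; lra. }
  assert (Hx : Rabs (wobj d K a u x - sumK K a * 0) <= B * r ^ 2).
  { unfold wobj; rewrite <- sumK_mult_r.
    apply sumK_weighted_dev; intros j Hj.
    pose proof (Hu j Hj); pose proof (Hpos x (u j)).
    rewrite Rminus_0_r, Rabs_pos_eq by nra.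
    apply pow_incr; lra. }
  pose proof (Hmin x).
  pose proof (Rle_abs (wobj d K a u x - sumK K a * 0)).
  pose proof (Rle_abs (- (wobj d K a u v - sumK K a * d x v ^ 2))) as Hv'.
  rewrite Rabs_Ropp in Hv'.
  nra.
Qed.

End Metric.

Theorem lemma3p2 (K : nat) (a : nat -> R) (r : R) :
  0 < sumK K a -> 0 < r ->
  exists Rad : R, 0 < Rad /\
    forall (T : Type) (d : T -> T -> R),
      is_metric d -> metric_complete d -> approx_midpoints d ->
      forall (x : T) (u : nat -> T),
        (forall j, (j < K)%nat -> d x (u j) < r) ->
        forall v : T, is_minimizer d K a u v -> d x v < Rad.
Proof.
  intros HA Hr.
  set (B := sumK K (fun j => Rabs (a j))).
  assert (HB : 0 <= B) by (apply sumK_ge0; intros; apply Rabs_pos).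
  assert (Hp : 0 <= 2 * B * r) by nra.
  assert (Hq : 0 <= 2 * B * r ^ 2) by nra.
  exists (1 + (2 * B * r + 2 * B * r ^ 2) / sumK K a); split.
  - pose proof (Rle_mult_inv_pos _ _ (Rplus_le_le_0_compat _ _ Hp Hq) HA); unfold Rdiv; lra.
  - intros T d Hd _ _ x u Hu v Hmin.
    apply quadratic_le_bound; try assumption.
    + apply Hd.
    + exact (minimizer_dist_sq_le T d Hd K a u x v r Hu Hmin).
Qed.
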